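(* Let $(\theta^k)_k$ be a sequence of Borel probability measures on $\mathbb{R}_+$, absolutely continuous with respect to Lebesgue measure, with densities $f_{\theta^k}=\sum_{m=1}^\infty \xi^k_m \mathbf{1}_{[m-1,m)}$ where $\xi^k=(\xi^k_1,\xi^k_2,\dots)$ is a probability distribution on the positive integers. Then $(\theta^k)_k$ satisfies the long-term condition (LTC) if and only if $\sum_{m=1}^\infty|\xi^k_{m+1}-\xi^k_m|\to0$ as $k\to\infty$.
   Context: For a Borel probability measure $\theta$ on $\mathbb{R}_+$ and $s\geq0$, $TV_s(\theta)=\sup_{Q\in\mathcal{B}(\mathbb{R}_+)}|\theta(Q)-\theta(Q+s)|$. A sequence $(\theta^k)_{k\ge1}$ satisfies the LTC if for every $S>0$, $\sup_{0\leq s\leq S}TV_s(\theta^k)\to0$ as $k\to\infty$. *)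

From HB Require Import structures.
From mathcomp Require Import all_boot all_order all_algebra.
From mathcomp Require Import all_classical all_reals all_analysis.
Set Implicit Arguments. Unset Strict Implicit. Unset Printing Implicit Defensive.
Import Order.TTheory GRing.Theory Num.Theory.
Import numFieldNormedType.Exports.
Local Open Scope classical_set_scope.
Local Open Scope ring_scope.
Local Open Scope ereal_scope.

Definition Rplus (R : realType) : set R := `[0%R, +oo[%classic.

Definition shift_set (R : realType) (Q : set R) (s : R) : set R :=
  [set (x + s)%R | x in Q].

Definition TV (R : realType) (theta : {measure set R -> \bar R}) (s : R) : \bar R :=
  ereal_sup [set `|theta Q - theta (shift_set Q s)| |
             Q in [set Q : set R | measurable Q /\ Q `<=` @Rplus R]].

Definition LTC (R : realType) (theta : nat -> {measure set R -> \bar R}) : Prop :=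
  forall S : R, (0 < S)%R ->
    (fun k => ereal_sup [set TV (theta k) s | s in `[0%R, S]%classic])
      @ \oo --> 0.

Definition step_density (R : realType) (xi : nat -> R) (x : R) : \bar R :=
  \sum_(1 <= m <oo) ((xi m)%:E * (\1_(`[(m%:R - 1)%R, m%:R[%classic) x)%:E).

(* On R_+ the density is the step function f(x) = xi_(floor x + 1).  For
   0 <= s < N, f(x) and f(x + s) differ by at most N consecutive jumps
   |xi_(m+1) - xi_m| starting at m = floor x + 1; integrating over Q gives
   TV_s(theta) <= N * D, where D = sum_m |xi_(m+1) - xi_m|.  Conversely, the
   union Q of the unit intervals on which the weights decrease satisfies
   theta(Q) - theta(Q + 1) = (sum of the decreases), and likewise the union of
   the other unit intervals gives the increases, so D <= 2 TV_1(theta). *)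

From HB Require Import structures.
From mathcomp Require Import all_boot all_order all_algebra.
From mathcomp Require Import all_classical all_reals all_analysis.
From mathcomp Require Import measurable_realfun.
From mathcomp Require Import ring lra.
Import Order.TTheory GRing.Theory Num.Theory.
Import numFieldNormedType.Exports.
Set Implicit Arguments. Unset Strict Implicit. Unset Printing Implicit Defensive.
Local Open Scope classical_set_scope.
Local Open Scope ring_scope.
Local Open Scope ereal_scope.

Section ExtendedRealDistance.
Variable R : realType.
Implicit Types a b M : \bar R.

Lemma abse_sub_le a b M : a \is a fin_num -> b \is a fin_num ->
  a <= b + M -> b <= a + M -> `|a - b| <= M.
Proof.
move: a b M => [a| |] [b| |] [M| |] //= _ _; rewrite ?leey//.
by rewrite -!EFinD !lee_fin => h1 h2; rewrite ler_norml; apply/andP; split; lra.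
Qed.

Lemma abse_sub_addr a b : a \is a fin_num -> 0 <= b -> `|a - (a + b)| = b.
Proof.
move: a b => [a| |] [b| |] //= _; rewrite ?lee_fin => b0.
by rewrite opprD addrA subrr sub0r normrN ger0_norm.
Qed.

Lemma abse_addrK a b : a \is a fin_num -> 0 <= b -> `|a + b - a| = b.
Proof. by move=> af b0; rewrite (addeC a b) addeK// gee0_abs. Qed.

End ExtendedRealDistance.

Lemma eseries_shift1 (R : realType) (u : nat -> \bar R) :
  (forall m, (1 <= m)%N -> 0 <= u m) ->
  \sum_(1 <= m <oo) u m = \sum_(n <oo) u n.+1.
Proof.
move=> u0; pose v m := if m == 0%N then 0 else u m.
have -> : \sum_(1 <= m <oo) u m = \sum_(1 <= m <oo) v m.
  apply: congr_lim; apply/funext => n; apply: eq_big_nat => m /andP[m1 _].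
  by rewrite /v; case: eqP => // m0; rewrite m0 in m1.
rewrite -nneseries_addn; last first.
  by move=> i; rewrite /v; case: eqP => // /eqP i0; apply: u0; rewrite lt0n.
by apply: eq_eseriesr => i _; rewrite /v addn1.
Qed.

Lemma nneseries_addn_le (R : realType) (u : nat -> \bar R) j :
  (forall n, 0 <= u n) -> \sum_(n <oo) u (n + j)%N <= \sum_(n <oo) u n.
Proof.
move=> u0; rewrite nneseries_addn// (@nneseries_split _ _ 0 j)// add0n.
by rewrite leeDr// sume_ge0.
Qed.

Section IntegralDistance.
Context d (T : measurableType d) (R : realType).
Variable mu : {measure set T -> \bar R}.
Variable D : set T.
Hypothesis mD : measurable D.

Lemma abse_integral_sub_le (F G H : T -> \bar R) :
  measurable_fun D F -> measurable_fun D G -> measurable_fun D H ->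
  (forall x, D x -> 0 <= F x) -> (forall x, D x -> 0 <= G x) ->
  (forall x, D x -> 0 <= H x) ->
  \int[mu]_(x in D) F x \is a fin_num -> \int[mu]_(x in D) G x \is a fin_num ->
  (forall x, D x -> F x <= G x + H x) -> (forall x, D x -> G x <= F x + H x) ->
  `|\int[mu]_(x in D) F x - \int[mu]_(x in D) G x| <= \int[mu]_(x in D) H x.
Proof.
move=> mF mG mH F0 G0 H0 Ffin Gfin FGH GFH.
have le_integralD (U V : T -> \bar R) :
    measurable_fun D U -> measurable_fun D V ->
    (forall x, D x -> 0 <= U x) -> (forall x, D x -> 0 <= V x) ->
    (forall x, D x -> U x <= V x + H x) ->
    \int[mu]_(x in D) U x <= \int[mu]_(x in D) V x + \int[mu]_(x in D) H x.
  move=> mU mV U0 V0 UVH; rewrite -ge0_integralD//.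
  by apply: ge0_le_integral => //; exact: emeasurable_funD.
by apply: abse_sub_le => //; exact: le_integralD.
Qed.

Lemma abse_integral_sub_eq (F G K : T -> \bar R) :
  measurable_fun D G -> measurable_fun D K ->
  (forall x, D x -> 0 <= G x) -> (forall x, D x -> 0 <= K x) ->
  \int[mu]_(x in D) G x \is a fin_num ->
  (forall x, D x -> F x = G x + K x) ->
  `|\int[mu]_(x in D) F x - \int[mu]_(x in D) G x| = \int[mu]_(x in D) K x /\
  `|\int[mu]_(x in D) G x - \int[mu]_(x in D) F x| = \int[mu]_(x in D) K x.
Proof.
move=> mG mK G0 K0 Gfin FGK.
have -> : \int[mu]_(x in D) F x = \int[mu]_(x in D) G x + \int[mu]_(x in D) K x.
  rewrite -ge0_integralD//; apply: eq_integral => x /[!inE]; exact: FGK.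
have K0' : 0 <= \int[mu]_(x in D) K x by exact: integral_ge0.
by rewrite abse_addrK// abse_sub_addr.
Qed.

End IntegralDistance.

Section StepFunctions.
Variable R : realType.
Local Notation mu := (@lebesgue_measure R).
Implicit Types (c : nat -> R) (x s : R).

Definition unit_itv (n : nat) : set R := `[n%:R, n.+1%:R[%classic.

Definition stepf c x : \bar R :=
  \sum_(n <oo) ((c n)%:E * (\1_(unit_itv n) x)%:E).

Definition jump c (n : nat) : R := `|c n.+1 - c n|%R.

Lemma jump_ge0 c n : (0 <= jump c n)%R.
Proof. exact: normr_ge0. Qed.

Lemma unit_itvP n x : unit_itv n x <-> (0 <= x)%R /\ Num.truncn x = n.
Proof.
rewrite /unit_itv /= in_itv /=; split.
  move=> /andP[h1 h2]; split; first exact: le_trans h1.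
  by apply: truncn_def; rewrite h1 h2.
by move=> [x0 <-]; exact: truncn_itv.
Qed.

Lemma measurable_unit_itv n : measurable (unit_itv n).
Proof. exact: measurable_itv. Qed.

Lemma lebesgue_measure_unit_itv n : mu (unit_itv n) = 1.
Proof.
rewrite /unit_itv lebesgue_measure_itv/= lte_fin ltr_nat ltnSn -EFinD.
by rewrite -natrB// subSnn.
Qed.

Lemma measurable_Rplus : measurable (@Rplus R).
Proof. exact: measurable_itv. Qed.

Section NonnegativeSteps.
Variable c : nat -> R.
Hypothesis c_ge0 : forall n, (0 <= c n)%R.

Let step_ge0 n x : 0 <= (c n)%:E * (\1_(unit_itv n) x)%:E.
Proof. by rewrite mule_ge0// lee_fin// indicE. Qed.

Let measurable_step n :
  measurable_fun [set: R] (fun x => (c n)%:E * (\1_(unit_itv n) x)%:E).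
Proof.
under eq_fun do rewrite -EFinM.
apply/measurable_EFinP; apply: measurable_funM => //.
apply: measurable_indic; exact: measurable_unit_itv.
Qed.

Lemma stepfE x :
  stepf c x = if (0 <= x)%R then (c (Num.truncn x))%:E else 0.
Proof.
rewrite /stepf; case: ifPn => x0.
  rewrite (@nneseriesD1 _ _ (Num.truncn x) xpredT)// indicE mem_set; last first.
    exact/unit_itvP.
  rewrite mule1 eseries0 ?adde0// => i _ /= ni.
  rewrite indicE memNset ?mulr0 ?mule0// => /unit_itvP[_ ti].
  by move: ni; rewrite ti eqxx.
rewrite eseries0// => i _ _; rewrite indicE memNset ?mulr0 ?mule0//.
by move=> /unit_itvP[+ _]; rewrite (negbTE x0).
Qed.

Lemma stepf_ge0 x : 0 <= stepf c x.
Proof. by rewrite stepfE; case: ifP; rewrite ?lee_fin. Qed.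

Lemma measurable_stepf : measurable_fun [set: R] (stepf c).
Proof. exact: (@ge0_emeasurable_sum _ _ _ _ _ xpredT). Qed.

Lemma measurable_stepf_shift s :
  measurable_fun [set: R] (fun x => stepf c (x + s)%R).
Proof.
apply: (measurableT_comp (f := stepf c)) measurable_stepf _.
exact: measurable_funD.
Qed.

Lemma integral_stepf D : measurable D ->
  \int[mu]_(x in D) stepf c x = \sum_(n <oo) ((c n)%:E * mu (unit_itv n `&` D)).
Proof.
move=> mD; rewrite integral_nneseries//; last first.
  by move=> n; apply: measurable_funTS; exact: measurable_step.
apply: eq_eseriesr => n _; rewrite ge0_integralZl_EFin//.
  by rewrite integral_indic//; exact: measurable_unit_itv.
apply/measurable_EFinP; apply: measurable_indic; exact: measurable_unit_itv.
Qed.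

Lemma integral_stepf_Rplus D : measurable D -> @Rplus R `<=` D ->
  \int[mu]_(x in D) stepf c x = \sum_(n <oo) (c n)%:E.
Proof.
move=> mD RD; rewrite integral_stepf//; apply: eq_eseriesr => n _.
rewrite setIidl ?lebesgue_measure_unit_itv ?mule1// => x /unit_itvP[x0 _].
by apply: RD; rewrite /Rplus /= in_itv /= x0.
Qed.

End NonnegativeSteps.
End StepFunctions.

Section Translation.
Variable R : realType.
Local Notation mu := (@lebesgue_measure R).

Lemma shift_setE (A : set R) s : shift_set A s = (fun x => x - s)%R @^-1` A.
Proof.
apply/seteqP; split => x /=; first by move=> [y Ay <-]; rewrite addrK.
by move=> Ax; exists (x - s)%R => //; rewrite subrK.
Qed.

Lemma measurable_shift_set (A : set R) s :
  measurable A -> measurable (shift_set A s).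
Proof.
move=> mA; rewrite shift_setE -[X in measurable X]setTI.
exact: measurable_funD.
Qed.

Lemma lebesgue_measure_shift_set (A : set R) s :
  measurable A -> mu (shift_set A s) = mu A.
Proof.
move=> mA; rewrite shift_setE.
pose f := (fun x : measurableTypeR R => (x - s)%R : measurableTypeR R).
have mf : measurable_fun [set: measurableTypeR R] f by exact: measurable_funD.
suff h : forall X, ocitv X -> mu X = pushforward mu f X.
  by rewrite (@lebesgue_measure_unique R (pushforward mu f) h A mA).
move=> X [[a b] _ <-]; rewrite /pushforward /=.
have -> : f @^-1` `]a, b]%classic = `](a + s)%R, (b + s)%R]%classic.
  by apply/seteqP; split => x /=; rewrite !in_itv /= ltrBrDr lerBlDr.
rewrite !lebesgue_measure_itv /= !lte_fin ltrD2r.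
by case: ifP => // _; rewrite -!EFinD; congr EFin; ring.
Qed.

Lemma integral_shift_set (A : set R) s (G : R -> \bar R) : measurable A ->
  measurable_fun [set: R] G -> (forall x, 0 <= G x) ->
  \int[mu]_(x in shift_set A s) G x = \int[mu]_(x in A) G (x + s)%R.
Proof.
move=> mA mG G0.
pose h := fun x : measurableTypeR R => (x + s)%R : measurableTypeR R.
have mh : measurable_fun [set: measurableTypeR R] h by exact: measurable_funD.
transitivity (\int[pushforward mu h]_(x in shift_set A s) G x).
  apply: eq_measure_integral => B mB _ /=; rewrite /pushforward /=.
  have -> : h @^-1` B = shift_set B (- s)%R by rewrite shift_setE opprK.
  by rewrite lebesgue_measure_shift_set.
rewrite ge0_integral_pushforward//; last 2 first.
- exact: measurable_shift_set.
- exact: measurable_funTS.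
congr (integral _ _ _).
by rewrite shift_setE; apply/seteqP; split => x /=; rewrite /h addrK.
Qed.

End Translation.

Section Jumps.
Variable R : realType.
Local Notation mu := (@lebesgue_measure R).
Variable c : nat -> R.
Hypothesis c_ge0 : forall n, (0 <= c n)%R.

Lemma dist_le_sum_jump t e N : (e <= N)%N ->
  (`|c t - c (t + e)%N| <= \sum_(j < N) jump c (t + j))%R.
Proof.
have telescope n : (`|c t - c (t + n)%N| <= \sum_(j < n) jump c (t + j))%R.
  elim: n => [|n IH]; first by rewrite addn0 subrr normr0 big_ord0.
  rewrite big_ord_recr /= (le_trans (ler_distD (c (t + n)%N) _ _))//.
  by rewrite lerD// addnS distrC.
move=> eN; rewrite -(subnKC eN) big_split_ord /=.
rewrite (le_trans (telescope e))// lerDl.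
by apply: sumr_ge0 => j _; exact: normr_ge0.
Qed.

Definition jump_majorant (N : nat) (x : R) : \bar R :=
  \sum_(j < N) stepf (fun n => jump c (n + j)) x.

Let jump_shift_ge0 j n : (0 <= jump c (n + j))%R. Proof. exact: jump_ge0. Qed.

Lemma jump_majorant_ge0 N x : 0 <= jump_majorant N x.
Proof. by apply: sume_ge0 => j _; exact: stepf_ge0. Qed.

Lemma measurable_jump_majorant N : measurable_fun [set: R] (jump_majorant N).
Proof. by apply: emeasurable_sum => j; exact: measurable_stepf. Qed.

Lemma stepf_shift_le N x s : (0 <= x)%R -> (0 <= s)%R -> (s < N%:R)%R ->
  stepf c x <= stepf c (x + s)%R + jump_majorant N x /\
  stepf c (x + s)%R <= stepf c x + jump_majorant N x.
Proof.
move=> x0 s0 sN; have xs0 : (0 <= x + s)%R by rewrite addr_ge0.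
rewrite /jump_majorant !stepfE//; under eq_bigr do rewrite stepfE//.
rewrite x0 xs0 sumEFin -!EFinD !lee_fin.
set t := Num.truncn x; set u := Num.truncn (x + s).
have tu : (t <= u)%N by apply: le_truncn; rewrite lerDl.
have uN : (u - t <= N)%N.
  rewrite leq_subLR /u truncn_le_nat -addSn natrD.
  by apply: ltrD => //; exact: truncnS_gt.
have := dist_le_sum_jump t uN; rewrite subnKC// => h.
have h1 := ler_norm (c t - c u); have h2 := ler_norm (c u - c t).
by rewrite distrC in h2; split; lra.
Qed.

Lemma integral_jump_majorant N :
  \int[mu]_(x in @Rplus R) jump_majorant N x <=
  (\sum_(n <oo) (jump c n)%:E) *+ N.
Proof.
rewrite /jump_majorant ge0_integral_sum//; last 3 first.
- exact: measurable_Rplus.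
- by move=> j; apply: measurable_funTS; exact: measurable_stepf.
- by move=> j x _; exact: stepf_ge0.
have -> : (\sum_(n <oo) (jump c n)%:E) *+ N =
    \sum_(j < N) \sum_(n <oo) (jump c n)%:E.
  by rewrite sumr_const card_ord.
apply: lee_sum => j _.
rewrite integral_stepf_Rplus//; last exact: measurable_Rplus.
apply: (@nneseries_addn_le _ (fun n => (jump c n)%:E)) => n.
by rewrite lee_fin jump_ge0.
Qed.

End Jumps.

Section StepSets.
Variable R : realType.
Implicit Type P : pred nat.

Definition step_set P : set R := \bigcup_(n in [set n | P n]) unit_itv n.

Lemma step_setP P x : step_set P x <-> (0 <= x)%R /\ P (Num.truncn x).
Proof.
split; first by move=> [n Pn /unit_itvP[x0 tn]]; rewrite tn.
by move=> [x0 Px]; exists (Num.truncn x) => //; exact/unit_itvP.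
Qed.

Lemma measurable_step_set P : measurable (step_set P).
Proof. by apply: bigcup_measurable => n _; exact: measurable_unit_itv. Qed.

Lemma step_set_Rplus P : step_set P `<=` @Rplus R.
Proof. by move=> x /step_setP[x0 _]; rewrite /Rplus /= in_itv /= x0. Qed.

Lemma step_setUC P : step_set P `|` step_set (predC P) = @Rplus R.
Proof.
apply/seteqP; split => [x [] /step_set_Rplus//|x].
rewrite /Rplus /= in_itv /= andbT => x0.
by case Px: (P (Num.truncn x)); [left|right]; apply/step_setP; rewrite /= ?Px.
Qed.

Lemma step_set_disjC P : [disjoint step_set P & step_set (predC P)].
Proof.
by apply/disj_setPS => x [/step_setP[_ Px] /step_setP[_ /negP]].
Qed.

End StepSets.


Section UnitShift.
Variables (R : realType) (c : nat -> R).
Hypothesis c_ge0 : forall n, (0 <= c n)%R.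

Lemma stepf_addr1 x :
  (0 <= x)%R -> stepf c (x + 1)%R = (c (Num.truncn x).+1)%:E.
Proof.
move=> x0; rewrite stepfE// ifT ?addr_ge0//.
by rewrite addrC truncnD ?truncn1 ?natr_nat// nnegrE.
Qed.

Lemma stepf_decr x : step_set (fun n => c n.+1 <= c n)%R x ->
  stepf c x = stepf c (x + 1)%R + stepf (jump c) x.
Proof.
move=> /step_setP[x0 dec].
rewrite stepf_addr1// stepfE// (stepfE (jump_ge0 c)) x0 -EFinD.
by rewrite /jump ler0_norm ?subr_le0//; congr EFin; ring.
Qed.

Lemma stepf_incr x : step_set (predC (fun n => c n.+1 <= c n)%R) x ->
  stepf c (x + 1)%R = stepf c x + stepf (jump c) x.
Proof.
move=> /step_setP[x0 /=]; rewrite -ltNge => /ltW inc.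
rewrite stepf_addr1// stepfE// (stepfE (jump_ge0 c)) x0 -EFinD.
by rewrite /jump ger0_norm ?subr_ge0//; congr EFin; ring.
Qed.

End UnitShift.

Lemma TV_ge0 (R : realType) (theta : {measure set R -> \bar R}) s :
  0 <= TV theta s.
Proof.
apply: le_trans (abse_ge0 (theta set0 - theta (shift_set set0 s))) _.
by apply: ereal_sup_ubound; exists set0 => //; split => //; exact: sub0set.
Qed.

Lemma TV_le_sup (R : realType) (theta : {measure set R -> \bar R}) (S s : R) :
  (0 <= s <= S)%R -> TV theta s <= ereal_sup [set TV theta t | t in `[0%R, S]].
Proof. by move=> sS; apply: ereal_sup_ubound; exists s; rewrite //= in_itv. Qed.

Section StepDensity.
Variables (R : realType) (xi : nat -> nat -> R)
  (theta : nat -> {measure set R -> \bar R}).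
Hypothesis xi_ge0 : forall k m, (1 <= m)%N -> (0 <= xi k m)%R.
Hypothesis xi_sum1 : forall k, \sum_(1 <= m <oo) (xi k m)%:E = 1.
Hypothesis theta_density : forall k (A : set R), measurable A ->
  theta k A = \int[@lebesgue_measure R]_(x in A) step_density (xi k) x.
Local Notation mu := (@lebesgue_measure R).

Let c k n := xi k n.+1.
Let c_ge0 k n : (0 <= c k n)%R. Proof. exact: xi_ge0. Qed.

Lemma step_densityE k x : step_density (xi k) x = stepf (c k) x.
Proof.
rewrite /step_density eseries_shift1; last first.
  by move=> m m1; rewrite mule_ge0// lee_fin ?xi_ge0// indicE.
by apply: eq_eseriesr => n _; rewrite /c /unit_itv -natr1 addrK.
Qed.

Lemma thetaE k A : measurable A -> theta k A = \int[mu]_(x in A) stepf (c k) x.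
Proof.
move=> mA; rewrite theta_density//.
by apply: eq_integral => x _; rewrite step_densityE.
Qed.

Lemma theta_shift_set k Q s : measurable Q ->
  theta k (shift_set Q s) = \int[mu]_(x in Q) stepf (c k) (x + s)%R.
Proof.
move=> mQ; rewrite thetaE; last exact: measurable_shift_set.
by rewrite integral_shift_set//; [exact: measurable_stepf|exact: stepf_ge0].
Qed.

Lemma theta_fin_num k A : measurable A -> theta k A \is a fin_num.
Proof.
move=> mA; rewrite ge0_fin_numE//; apply: (@le_lt_trans _ _ (theta k setT)).
  by apply: le_measure; rewrite ?inE.
rewrite thetaE// integral_stepf_Rplus// [X in X < _](_ : _ = 1) ?ltry//.
by rewrite -(xi_sum1 k) eseries_shift1// => m m1; rewrite lee_fin xi_ge0.
Qed.

Let integral_fin_num k (Q : set R) s : measurable Q ->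
  \int[mu]_(x in Q) stepf (c k) x \is a fin_num /\
  \int[mu]_(x in Q) stepf (c k) (x + s)%R \is a fin_num.
Proof.
move=> mQ; rewrite -thetaE// -theta_shift_set//.
by split; apply: theta_fin_num => //; exact: measurable_shift_set.
Qed.

Lemma jump_seriesE k : \sum_(1 <= m <oo) `|(xi k m.+1 - xi k m)%R|%:E =
  \sum_(n <oo) (jump (c k) n)%:E.
Proof. by rewrite eseries_shift1// => m _; rewrite lee_fin. Qed.

Lemma TV_le_jumps k (S s : R) : (0 <= s)%R -> (s <= S)%R ->
  TV (theta k) s <=
  (\sum_(1 <= m <oo) `|(xi k m.+1 - xi k m)%R|%:E) *+ (Num.truncn S).+1.
Proof.
move=> s0 sS; rewrite jump_seriesE; set N := (Num.truncn S).+1.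
have sN : (s < N%:R)%R by exact: le_lt_trans sS (truncnS_gt S).
apply: ge_ereal_sup => _ [Q [mQ QR] <-].
have [finQ finQs] := integral_fin_num k s mQ.
have Q0 x : Q x -> (0 <= x)%R by move=> /QR; rewrite /Rplus /= in_itv /= andbT.
apply: (le_trans _ (integral_jump_majorant (c k) N)).
apply: (@le_trans _ _ (\int[mu]_(x in Q) jump_majorant (c k) N x)); last first.
  apply: ge0_subset_integral => //; first exact: measurable_Rplus.
  - apply: measurable_funTS; exact: measurable_jump_majorant.
  - by move=> x _; exact: jump_majorant_ge0.
rewrite thetaE// theta_shift_set//.
apply: abse_integral_sub_le => //.
- exact: measurable_funTS (measurable_stepf (c_ge0 k)).
- exact: measurable_funTS (measurable_stepf_shift (c_ge0 k) s).
- exact: measurable_funTS (measurable_jump_majorant (c k) N).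
- by move=> x _; exact: stepf_ge0.
- by move=> x _; exact: stepf_ge0.
- by move=> x _; exact: jump_majorant_ge0.
- by move=> x /Q0 x0; have [] := stepf_shift_le (c_ge0 k) x0 s0 sN.
- by move=> x /Q0 x0; have [] := stepf_shift_le (c_ge0 k) x0 s0 sN.
Qed.

Lemma integral_le_TV k s (Q : set R) (K : R -> \bar R) :
  measurable Q -> Q `<=` @Rplus R ->
  measurable_fun [set: R] K -> (forall x, 0 <= K x) ->
  (forall x, Q x -> stepf (c k) x = stepf (c k) (x + s)%R + K x) \/
  (forall x, Q x -> stepf (c k) (x + s)%R = stepf (c k) x + K x) ->
  \int[mu]_(x in Q) K x <= TV (theta k) s.
Proof.
move=> mQ QR mK K0 hK; apply: ereal_sup_ubound; exists Q => //.
have [finQ finQs] := integral_fin_num k s mQ.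
rewrite thetaE// theta_shift_set//.
have mKQ : measurable_fun Q K by exact: measurable_funTS.
have K0Q x : Q x -> 0 <= K x by move=> _; exact: K0.
have f0Q (g : R -> R) x : Q x -> 0 <= stepf (c k) (g x).
  by move=> _; exact: stepf_ge0.
have mf := measurable_funTS (D := Q) (measurable_stepf (c_ge0 k)).
have mfs := measurable_funTS (D := Q) (measurable_stepf_shift (c_ge0 k) s).
case: hK => hK.
- by have [] := abse_integral_sub_eq (mu := mu) mQ mfs mKQ (f0Q _) K0Q finQs hK.
- by have [_] := abse_integral_sub_eq (mu := mu) mQ mf mKQ (f0Q id) K0Q finQ hK.
Qed.

Lemma jumps_le_TV1 k :
  \sum_(1 <= m <oo) `|(xi k m.+1 - xi k m)%R|%:E <=
  TV (theta k) 1 + TV (theta k) 1.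
Proof.
rewrite jump_seriesE.
pose P n := (c k n.+1 <= c k n)%R.
have jump_k_ge0 := @jump_ge0 R (c k).
rewrite -(integral_stepf_Rplus jump_k_ge0 (@measurable_Rplus R)
  (@subset_refl _ _)).
rewrite -(@step_setUC R P) ge0_integral_setU//; last 5 first.
- exact: measurable_step_set.
- exact: measurable_step_set.
- apply: measurable_funTS; exact: measurable_stepf.
- by move=> x _; exact: stepf_ge0.
- exact: step_set_disjC.
apply: leeD; apply: integral_le_TV.
- exact: measurable_step_set.
- exact: step_set_Rplus.
- exact: measurable_stepf.
- by move=> x; exact: stepf_ge0.
- by left => x; exact: stepf_decr.
- exact: measurable_step_set.
- exact: step_set_Rplus.
- exact: measurable_stepf.
- by move=> x; exact: stepf_ge0.
- by right => x; exact: stepf_incr.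
Qed.

End StepDensity.

Theorem mainTheorem4 (R : realType) (xi : nat -> nat -> R)
  (theta : nat -> {measure set R -> \bar R})
  (xi_ge0 : forall k m, (1 <= m)%N -> (0 <= xi k m)%R)
  (xi_sum1 : forall k, \sum_(1 <= m <oo) (xi k m)%:E = 1)
  (theta_density : forall k (A : set R), measurable A ->
     theta k A = \int[@lebesgue_measure R]_(x in A) step_density (xi k) x) :
  LTC theta <->
  (fun k => \sum_(1 <= m <oo) `|(xi k m.+1 - xi k m)%R|%:E) @ \oo --> 0.
Proof.
set D := (fun k => _).
have D_ge0 k : 0 <= D k by apply: nneseries_ge0 => n _ _; rewrite lee_fin.
split => [LTC1 | D0 S S0].
- have := LTC1 1%R ltr01; set sup := (fun k => ereal_sup _) => sup0.
  apply: (@squeeze_cvge _ _ _ _ (fun=> 0) _ (fun k => sup k + sup k)).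
  + apply: nearW => k; rewrite D_ge0 /=.
    have TV1 : TV (theta k) 1 <= sup k.
      by apply: TV_le_sup; rewrite ler01 lexx.
    apply: le_trans (leeD TV1 TV1).
    exact: jumps_le_TV1 xi_ge0 xi_sum1 theta_density k.
  + exact: cvg_cst.
  + by rewrite -(adde0 0); apply: cvgeD.
- set N := (Num.truncn S).+1.
  apply: (@squeeze_cvge _ _ _ _ (fun=> 0) _ (fun k => D k *+ N)).
  + apply: nearW => k; apply/andP; split.
      by apply: le_trans (TV_ge0 _ 0) (TV_le_sup _ _); rewrite lexx ltW.
    apply: ge_ereal_sup => _ [s sS' <-].
    have /andP[s0 sS] : (0 <= s <= S)%R by move: sS'; rewrite /= in_itv.
    exact (TV_le_jumps xi_ge0 xi_sum1 theta_density k s0 sS).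
  + exact: cvg_cst.
  + under eq_fun do rewrite -mule_natl.
    by rewrite -(mule0 N%:R%:E); exact: cvgeZl.
Qed.
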